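(* Let $e_1,\dots,e_n$ be an orthonormal basis of $\mathbb{R}^n$ and, for $0<\alpha<1$, let $$T_{\alpha}=\{x\in\mathbb{R}^n: |x\cdot e_1|\leq\alpha\ \text{and}\ |x\cdot e_2|^2+\cdots+|x\cdot e_n|^2\leq1\}.$$ If $j\neq n$, $0<q<n-j$, and $Q\in\mathcal{S}_o^n$ is fixed, then $$\lim_{\alpha\rightarrow0^+}\int_{S^{n-1}}\rho_{T_\alpha}^q(u)\rho_Q^{n-q-j}(u)\,du=0.$$
   Context: $\mathcal{S}_o^n$ denotes the set of compact sets in $\mathbb{R}^n$ star-shaped about the origin whose radial function $\rho_Q(x)=\max\{\lambda\ge0:\lambda x\in Q\}$ is positive and continuous on $\mathbb{R}^n\setminus\{0\}$; $\rho_{T_\alpha}$ is the radial function of $T_\alpha$ defined the same way; $du$ is spherical Lebesgue measure on $S^{n-1}$. *)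

From HB Require Import structures.
From mathcomp Require Import all_boot all_order all_algebra.
From mathcomp Require Import all_classical all_reals all_analysis.
Set Implicit Arguments. Unset Strict Implicit. Unset Printing Implicit Defensive.
Import Order.TTheory GRing.Theory Num.Theory.
Import numFieldNormedType.Exports.
Local Open Scope classical_set_scope.
Local Open Scope ring_scope.

Section Defs.
Variable R : realType.

Definition dotp (n : nat) (x y : 'rV[R]_n) : R := \sum_(i < n) x 0 i * y 0 i.
Definition enorm (n : nat) (x : 'rV[R]_n) : R := Num.sqrt (dotp x x).

(* e_1,...,e_n (here e 0, ..., e (n-1)) is an orthonormal family of n vectors
   in R^n, i.e. an orthonormal basis *)
Definition orthonormal_basis (n : nat) (e : nat -> 'rV[R]_n) : Prop :=
  forall i j, (i < n)%N -> (j < n)%N -> dotp (e i) (e j) = (i == j)%:R.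

Definition Talpha (n : nat) (e : nat -> 'rV[R]_n) (alpha : R) : set 'rV[R]_n :=
  [set x | `|dotp x (e 0%N)| <= alpha /\
           \sum_(1 <= i < n) (dotp x (e i)) ^+ 2 <= 1].

Definition radial (n : nat) (Q : set 'rV[R]_n) (x : 'rV[R]_n) : R :=
  sup [set l : R | 0 <= l /\ Q (l *: x)].

Definition star_shaped0 (n : nat) (Q : set 'rV[R]_n) : Prop :=
  forall x, Q x -> forall t : R, 0 <= t <= 1 -> Q (t *: x).

Definition in_Son (n : nat) (Q : set 'rV[R]_n) : Prop :=
  [/\ compact Q, star_shaped0 Q,
      (forall x, x != 0 -> 0 < radial Q x) &
      {within [set x | x != 0], continuous (radial Q)}].

Definition setcoord (n : nat) (x : 'rV[R]_n) (k : nat) (t : R) : 'rV[R]_n :=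
  \row_(i < n) (if (i : nat) == k then t else x 0 i).

(* iterated Lebesgue integral over the first k coordinates;
   iint n f 0 is the Lebesgue integral of f over R^n *)
Fixpoint iint (n : nat) (k : nat) (f : 'rV[R]_n -> \bar R) (x : 'rV[R]_n)
  : \bar R :=
  match k with
  | 0%N => f x
  | k'.+1 => (\int[lebesgue_measure]_(t in [set: R]) iint k' f (setcoord x k' t))%E
  end.

(* integral over S^{n-1} w.r.t. spherical Lebesgue measure, defined via the
   cone measure:  int_{S^{n-1}} g du = n * int_{B^n} g(x/|x|) dx *)
Definition sphere_integral (n : nat) (g : 'rV[R]_n -> \bar R) : \bar R :=
  ((n%:R)%:E * iint n
     (fun x => if ((0 < enorm x) && (enorm x <= 1))%R
               then g ((enorm x)^-1 *: x)%R else 0%E) 0)%E.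

End Defs.

From HB Require Import structures.
From mathcomp Require Import all_boot all_order all_algebra.
From mathcomp Require Import all_classical all_reals all_analysis.
From mathcomp Require Import ring lra measurable_realfun.
Import Order.TTheory GRing.Theory Num.Theory.
Import numFieldNormedType.Exports.
Local Open Scope classical_set_scope.
Local Open Scope ring_scope.

(* On the unit sphere rho_{T_alpha} is at most 2, and at most alpha / eta off
   the slab |u.e_1| < eta; rho_Q is bounded because Q is compact.  Through the
   cone-measure definition of the spherical integral, the integrand is thus
   dominated on the cube [-1, 1]^n by C (alpha / eta)^q plus C' times the
   indicator of the slab |x.e_1| < eta.  Integrating one coordinate at a time,
   starting with those on which e_1 vanishes, the slab only costs a factor
   2 eta / |e_1 i0| at the first coordinate i0 where e_1 does not vanish, so the
   integral is at most K (alpha / eta)^q + L eta.  Taking first eta and then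
   alpha small gives the limit. *)

Set Implicit Arguments.
Unset Strict Implicit.
Unset Printing Implicit Defensive.

Section Dotp.
Variables (R : realType) (n : nat).
Implicit Types (u v x : 'rV[R]_n).

Lemma dotpC u v : dotp u v = dotp v u.
Proof. by apply: eq_bigr => i _; rewrite mulrC. Qed.

Lemma dotpZl l u v : dotp (l *: u) v = l * dotp u v.
Proof. by rewrite /dotp mulr_sumr; apply: eq_bigr => i _; rewrite mxE mulrA. Qed.

Lemma dotp0l v : dotp 0 v = 0.
Proof. by rewrite -(scale0r 0) dotpZl mul0r. Qed.

Lemma dotp_mx u v : dotp u v = (u *m v^T) 0 0.
Proof. by rewrite !mxE; apply: eq_bigr => i _; rewrite !mxE. Qed.

Lemma sqr_coord_le_dotp x i : x 0 i ^+ 2 <= dotp x x.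
Proof.
rewrite /dotp (bigD1 i)//= -expr2 lerDl sumr_ge0// => k _.
by rewrite -expr2 sqr_ge0.
Qed.

Lemma dotp_ge0 x : 0 <= dotp x x.
Proof. by rewrite /dotp sumr_ge0// => i _; rewrite -expr2 sqr_ge0. Qed.

Lemma enorm_sqr x : enorm x ^+ 2 = dotp x x.
Proof. by rewrite sqr_sqrtr ?dotp_ge0. Qed.

Lemma dotp_normalize x : 0 < enorm x ->
  dotp ((enorm x)^-1 *: x) ((enorm x)^-1 *: x) = 1.
Proof.
move=> x0; rewrite dotpZl dotpC dotpZl -enorm_sqr.
by rewrite mulrA -expr2 -exprMn mulVf ?gt_eqF// expr1n.
Qed.

Lemma sum_sqr_dotp_orthonormal (e : nat -> 'rV[R]_n) u : orthonormal_basis e ->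
  \sum_(i < n) dotp u (e i) ^+ 2 = dotp u u.
Proof.
move=> oe; pose E : 'M[R]_n := \matrix_(i, k) e i 0 k.
have EEt : E *m E^T = 1%:M.
  apply/matrixP => i k; rewrite !mxE -[RHS](oe i k) ?ltn_ord// dotp_mx !mxE.
  by apply: eq_bigr => l _; rewrite !mxE.
pose v := u *m E^T.
have vE i : v 0 i = dotp u (e i).
  by rewrite dotp_mx !mxE; apply: eq_bigr => l _; rewrite !mxE.
under eq_bigr do rewrite -vE expr2.
rewrite -/(dotp v v) !dotp_mx trmx_mul trmxK !mulmxA -(mulmxA u).
by rewrite (mulmx1C EEt) mulmx1.
Qed.

End Dotp.

Section Radial.
Variables (R : realType) (n : nat).
Implicit Types (S : set 'rV[R]_n) (u y : 'rV[R]_n).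

Lemma radial_ge0 S u : 0 <= radial S u.
Proof.
rewrite /radial.
have [hs|nhs] := pselect (has_sup [set l : R | 0 <= l /\ S (l *: u)]).
  case: (hs) => -[l [l0 Sl]] _.
  exact: le_trans l0 (sup_upper_bound hs (conj l0 Sl)).
by rewrite (sup_out nhs).
Qed.

Lemma radial_le S u b : 0 <= b ->
  (forall l, 0 <= l -> S (l *: u) -> l <= b) -> radial S u <= b.
Proof.
move=> b0 Sb; rewrite /radial.
have [->|/set0P ne] := eqVneq [set l : R | 0 <= l /\ S (l *: u)] set0.
  by rewrite sup0.
by apply: ge_sup => // l [l0 Sl]; exact: Sb.
Qed.

Lemma normr_coord_le y i : `|y 0 i| <= `|y|.
Proof.
rewrite [leRHS]/Num.norm /= mx_normrE; apply/bigmax_geP; right.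
by exists (ord0, i).
Qed.

Lemma radial_compact_le S : compact S ->
  exists M, forall u, dotp u u = 1 -> radial S u <= M.
Proof.
move=> /compact_bounded [M [_ SM]].
set c := `|M| + 1.
have Sc y i : S y -> `|y 0 i| <= c.
  move=> Sy; apply: le_trans (normr_coord_le y i) (SM c _ y Sy).
  by apply: le_lt_trans (ler_norm M) _; rewrite ltrDl.
have c0 : 0 <= c by rewrite addr_ge0.
have M0 : 0 <= 1 + n%:R * c ^+ 2 by rewrite addr_ge0// mulr_ge0// sqr_ge0.
exists (1 + n%:R * c ^+ 2) => u uu.
apply: radial_le => // l l0 Sl.
have : dotp (l *: u) (l *: u) <= n%:R * c ^+ 2.
  apply: (@le_trans _ _ (\sum_(i < n) c ^+ 2)).
    apply: ler_sum => i _.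
    by rewrite -expr2 -real_normK ?num_real// lerXn2r ?nnegrE ?Sc.
  by rewrite sumr_const card_ord mulr_natl.
rewrite dotpZl dotpC dotpZl uu mulr1 => h; nra.
Qed.

End Radial.

Section RadialTalpha.
Variables (R : realType) (n : nat) (e : nat -> 'rV[R]_n).
Hypotheses (n_gt0 : (0 < n)%N) (oe : orthonormal_basis e).
Implicit Types (u : 'rV[R]_n) (alpha l : R).

Lemma Talpha_scale_le alpha l u : dotp u u = 1 -> 0 <= l ->
  Talpha e alpha (l *: u) ->
  l ^+ 2 <= alpha ^+ 2 + 1 /\ l * `|dotp u (e 0%N)| <= alpha.
Proof.
move=> uu l0 [Te0 Tsum].
rewrite dotpZl normrM ger0_norm // in Te0; split => //.
have := sum_sqr_dotp_orthonormal u oe.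
rewrite uu -(big_mkord xpredT (fun i => dotp u (e i) ^+ 2)) big_ltn// => P.
have -> : l ^+ 2 = (l * dotp u (e 0%N)) ^+ 2 +
    \sum_(1 <= i < n) dotp (l *: u) (e i) ^+ 2.
  rewrite -[l ^+ 2]mulr1 -P mulrDr exprMn mulr_sumr.
  by congr (_ + _); apply: eq_bigr => i _; rewrite dotpZl exprMn.
rewrite lerD // -real_normK ?num_real// normrM ger0_norm//.
have := mulr_ge0 l0 (normr_ge0 (dotp u (e 0%N))); nra.
Qed.

Lemma radial_Talpha_le2 alpha u : dotp u u = 1 -> alpha <= 1 ->
  radial (Talpha e alpha) u <= 2.
Proof.
move=> uu a1; apply: radial_le => // l l0 /(Talpha_scale_le uu l0) [lsq la].
have z0 := mulr_ge0 l0 (normr_ge0 (dotp u (e 0%N))).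
nra.
Qed.

Lemma radial_Talpha_le_div alpha eta u : dotp u u = 1 -> 0 <= alpha ->
  0 < eta -> eta <= `|dotp u (e 0%N)| -> radial (Talpha e alpha) u <= alpha / eta.
Proof.
move=> uu a0 eta0 etau.
have ae0 : 0 <= alpha / eta by rewrite divr_ge0 // ltW.
apply: radial_le => // l l0 /(Talpha_scale_le uu l0) [_ la].
by rewrite ler_pdivlMr// (le_trans _ la)// ler_wpM2l.
Qed.

End RadialTalpha.

Section IntegralT.
Context {d : measure_display} {T : measurableType d} {R : realType}.
Variable mu : measure T R.

(* Unlike [ge0_le_integral], no measurability is required: the integral of a
   nonnegative function is the supremum over its simple minorants. *)
Lemma ge0_le_integralT (f g : T -> \bar R) : (forall t, 0 <= f t)%E ->
  (forall t, f t <= g t)%E -> (\int[mu]_t f t <= \int[mu]_t g t)%E.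
Proof.
move=> f0 fg; have g0 t : (0 <= g t)%E := le_trans (f0 t) (fg t).
rewrite !ge0_integralTE//; apply: ereal_sup_le => _ [h hf <-].
by exists h => //= x; exact: le_trans (hf x) (fg x).
Qed.

Lemma integral_scale_indic (A : set T) (c : R) : measurable A -> 0 <= c ->
  (\int[mu]_t (c * \1_A t)%:E = c%:E * mu A)%E.
Proof.
move=> mA c0; rewrite (integralZl_indic _ (fun=> A)) ?integral_indic ?setIT//.
by move=> /(le_lt_trans c0); rewrite ltxx.
Qed.

Lemma integral_scale_indicD (A B : set T) (a b : R) :
  measurable A -> measurable B -> 0 <= a -> 0 <= b ->
  (\int[mu]_t (a * \1_A t + b * \1_B t)%:E = a%:E * mu A + b%:E * mu B)%E.
Proof.
move=> mA mB a0 b0; under eq_integral do rewrite EFinD.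
have mI (C : set T) (c : R) :
    measurable C -> measurable_fun [set: T] (fun t => (c * \1_C t)%:E).
  by move=> mC; apply/measurable_EFinP/measurable_funM => //; exact: measurable_indic.
rewrite ge0_integralD ?integral_scale_indic//; try exact: mI.
all: by move=> t _; rewrite lee_fin mulr_ge0.
Qed.

End IntegralT.

Section IteratedIntegral.
Variables (R : realType) (n : nat).
Implicit Types (f : 'rV[R]_n -> \bar R) (G : 'rV[R]_n -> R) (a x y : 'rV[R]_n).

(* [box k y]: the coordinates of [y] that [iint k] does not integrate lie in
   [-1, 1]. *)
Definition box (k : nat) y : bool :=
  [forall i : 'I_n, (k <= i)%N ==> (`|y 0 i| <= 1)].

Lemma box_n y : box n y.
Proof. by apply/forallP => i; rewrite leqNgt ltn_ord. Qed.

Lemma box0_enorm_le1 x : enorm x <= 1 -> box 0 x.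
Proof.
move=> x1; apply/forallP => i; rewrite leq0n /= -(expr_le1 (n := 2)) ?normr_ge0//.
rewrite real_normK ?num_real// (le_trans (sqr_coord_le_dotp x i))// -enorm_sqr.
by rewrite expr_le1 // sqrtr_ge0.
Qed.

Lemma box_setcoord k x t : (k < n)%N -> box k (setcoord x k t) ->
  (`|t| <= 1) && box k.+1 x.
Proof.
move=> kn /forallP bx; apply/andP; split.
  by have := bx (Ordinal kn); rewrite leqnn mxE eqxx.
apply/forallP => i; apply/implyP => ki.
by have := bx i; rewrite (ltnW ki) mxE (gtn_eqF ki).
Qed.

Lemma iint_ge0 f : (forall y, 0 <= f y)%E -> forall k x, (0 <= iint k f x)%E.
Proof.
move=> f0; elim=> [|k IH] x /=; first exact: f0.
by apply: integral_ge0 => t _; exact: IH.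
Qed.

Lemma iint_box_step f G k : (k < n)%N ->
  (forall y, 0 <= f y)%E -> (forall y, 0 <= G y) ->
  (forall x t, G (setcoord x k t) = G x) ->
  (forall y, iint k f y <= ((box k y)%:R * G y)%:E)%E ->
  forall x, (iint k.+1 f x <= ((box k.+1 x)%:R * (2 * G x))%:E)%E.
Proof.
move=> kn f0 G0 Ginv fG x /=.
set c := (box k.+1 x)%:R * G x.
have c0 : 0 <= c by rewrite mulr_ge0.
apply: le_trans (@ge0_le_integralT _ _ _ lebesgue_measure _
  (fun t => (c * \1_[set` `[(-1 : R), 1]] t)%:E) _ _) _.
- by move=> t; exact: iint_ge0.
- move=> t; apply: le_trans (fG _) _; rewrite Ginv lee_fin.
  have [/(box_setcoord kn)/andP[t1 bx]|_] := boolP (box k (setcoord x k t)).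
    by rewrite /c bx indicE mem_set ?mulr1 // /= in_itv /= -ler_norml.
  by rewrite mul0r mulr_ge0 ?indic_ge0.
rewrite integral_scale_indic//= lebesgue_measure_itv /= lte_fin gtrN//.
by rewrite -EFinD -EFinM lee_fin opprK /c mulrCA mulrC.
Qed.

Lemma iint_box_iter f G k m : (k <= m <= n)%N ->
  (forall y, 0 <= f y)%E -> (forall y, 0 <= G y) ->
  (forall i x t, (k <= i < m)%N -> G (setcoord x i t) = G x) ->
  (forall y, iint k f y <= ((box k y)%:R * G y)%:E)%E ->
  forall x, (iint m f x <= ((box m x)%:R * (2 ^+ (m - k) * G x))%:E)%E.
Proof.
move=> /andP[+ mn] f0 G0 + fG; elim: m mn => [|m IH] mn km Ginv x.
  by move: km; rewrite leqn0 => /eqP k0; rewrite k0 subnn expr0 mul1r -k0; exact: fG.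
have [<-|km'] := eqVneq k m.+1; first by rewrite subnn expr0 mul1r; exact: fG.
have {}km : (k <= m)%N by rewrite -ltnS ltn_neqAle km' km.
rewrite subSn // exprS -mulrA.
apply: (iint_box_step (G := fun y => 2 ^+ (m - k) * G y)) => //.
- by move=> y; rewrite mulr_ge0 ?exprn_ge0.
- by move=> y t; rewrite Ginv // km leqnn.
- apply: IH => [|//|i y t /andP[ki im]]; first exact: ltnW.
  by apply: Ginv; rewrite ki ltnW.
Qed.

Lemma dotp_setcoord (i : 'I_n) x a t :
  dotp (setcoord x i t) a = dotp (setcoord x i 0) a + t * a 0 i.
Proof.
rewrite /dotp (bigD1 i)//= [in RHS](bigD1 i)//= !mxE eqxx mul0r add0r addrC.
congr (_ + _); apply: eq_bigr => k ki.
by rewrite !mxE (negbTE (ki : (k : nat) != i)).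
Qed.

Lemma dotp_setcoord_eq0 k x a t : (forall i : 'I_n, val i = k -> a 0 i = 0) ->
  dotp (setcoord x k t) a = dotp x a.
Proof.
move=> ak; apply: eq_bigr => i _; rewrite mxE.
by case: eqP => [/ak ->|//]; rewrite !mulr0.
Qed.

Lemma iint_box_slab_step f (A B eta : R) a (i : 'I_n) :
  (forall y, 0 <= f y)%E -> 0 <= A -> 0 <= B -> 0 < eta -> a 0 i != 0 ->
  (forall y, iint i f y <=
     ((box i y)%:R * (A + B * (`|dotp y a| < eta)%R%:R))%:E)%E ->
  forall x, (iint i.+1 f x <=
     ((box i.+1 x)%:R * (2 * A + 2 * B * eta / `|a 0 i|))%:E)%E.
Proof.
move=> f0 A0 B0 eta0 ai0 fAB x /=.
have ai : 0 < `|a 0 i| by rewrite normr_gt0.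
(* As a function of the i-th coordinate t, the slab is the ball B(c, r). *)
set r := eta / `|a 0 i|; set c := - dotp (setcoord x i 0) a / a 0 i.
have r0 : 0 <= r by rewrite divr_ge0 ?ltW.
set bx := (box i.+1 x)%:R.
apply: le_trans (@ge0_le_integralT _ _ _ lebesgue_measure _
  (fun t => (bx * A * \1_[set` `[(-1 : R), 1]] t + bx * B * \1_(ball c r) t)%:E)
  _ _) _.
- by move=> t; exact: iint_ge0.
- move=> t; apply: le_trans (fAB _) _; rewrite lee_fin.
  have [/(box_setcoord (ltn_ord i))/andP[t1 bxi]|_] := boolP (box i (setcoord x i t));
    last by rewrite mul0r addr_ge0 ?mulr_ge0 ?indic_ge0.
  rewrite /bx bxi indicE mem_set /=; last by rewrite in_itv /= -ler_norml.
  rewrite !mul1r mulr1 lerD2l.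
  case: ltP => slab; last by rewrite mulr0 mulr_ge0 ?indic_ge0.
  rewrite indicE mem_set ?mulr1 // /ball /= distrC /c /r ltr_pdivlMr// -normrM.
  by rewrite mulrBl divfK // opprK addrC -dotp_setcoord.
rewrite integral_scale_indicD ?mulr_ge0//=; last exact: measurable_ball.
rewrite lebesgue_measure_itv lebesgue_measure_ball//= lte_fin gtrN// opprK.
rewrite -!EFinM -EFinD lee_fin le_eqVlt; apply/predU1l.
by rewrite /r; ring.
Qed.

Lemma iint_slab_le f (A B eta : R) a (i0 : 'I_n) :
  (forall y, 0 <= f y)%E -> 0 <= A -> 0 <= B -> 0 < eta -> a 0 i0 != 0 ->
  (forall i : 'I_n, (i < i0)%N -> a 0 i = 0) ->
  (forall y, f y <= ((box 0 y)%:R * (A + B * (`|dotp y a| < eta)%R%:R))%:E)%E ->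
  (iint n f 0 <= (2 ^+ n * (A + B * eta / `|a 0 i0|))%:E)%E.
Proof.
move=> f0 A0 B0 eta0 ai0 a_lt fAB.
set S := fun y => (`|dotp y a| < eta)%R%:R : R.
have up_to_i0 y : (iint i0 f y <=
    ((box i0 y)%:R * (2 ^+ i0 * A + 2 ^+ i0 * B * S y))%:E)%E.
  rewrite -mulrA -mulrDr -[X in 2 ^+ X](subn0 i0).
  apply: (iint_box_iter (G := fun y => A + B * S y)) => // [|z|k x t /andP[_ ki]].
  - exact: ltnW.
  - by rewrite addr_ge0 ?mulr_ge0.
  - by rewrite /S dotp_setcoord_eq0// => i ik; apply: a_lt; rewrite ik.
have C0 : 0 <= 2 ^+ i0.+1 * (A + B * eta / `|a 0 i0|).
  by rewrite mulr_ge0 ?exprn_ge0 // addr_ge0 // divr_ge0 ?mulr_ge0 // ltW.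
have past_i0 y : (iint i0.+1 f y <=
    ((box i0.+1 y)%:R * (2 ^+ i0.+1 * (A + B * eta / `|a 0 i0|)))%:E)%E.
  apply: le_trans (iint_box_slab_step _ _ _ eta0 ai0 up_to_i0 y) _;
    rewrite ?mulr_ge0 ?exprn_ge0// lee_fin le_eqVlt; apply/predU1l.
  by rewrite exprS; ring.
have := @iint_box_iter f (fun=> _) i0.+1 n _ f0 (fun=> C0)
  (fun _ _ _ _ => erefl) past_i0 0.
by rewrite box_n mul1r mulrA -exprD subnK//; apply; rewrite ltn_ord leqnn.
Qed.

End IteratedIntegral.

Lemma ler_powR2r (R : realType) (r a b : R) : 0 <= r -> 0 <= a -> a <= b ->
  a `^ r <= b `^ r.
Proof.
by move=> r0 a0 ab; apply: ge0_ler_powR; rewrite ?nnegrE// (le_trans a0).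
Qed.

Section SphereIntegrand.
Variables (R : realType) (n : nat) (e : nat -> 'rV[R]_n) (Q : set 'rV[R]_n).
Variables (M p q : R).
Hypotheses (n_gt0 : (0 < n)%N) (oe : orthonormal_basis e).
Hypotheses (p0 : 0 <= p) (q0 : 0 <= q).
Hypothesis QM : forall u, dotp u u = 1 -> radial Q u <= M.
Implicit Types (u x : 'rV[R]_n) (alpha eta : R).

Lemma radial_Talpha_Q_le alpha eta u : dotp u u = 1 -> 0 < alpha <= 1 -> 0 < eta ->
  radial (Talpha e alpha) u `^ q * radial Q u `^ p <=
  M `^ p * (alpha / eta) `^ q + M `^ p * 2 `^ q * (`|dotp u (e 0%N)| < eta)%R%:R.
Proof.
move=> uu /andP[a0 a1] eta0.
have Qp : radial Q u `^ p <= M `^ p by rewrite ler_powR2r ?radial_ge0 ?QM.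
rewrite mulrC; have [slab|slab] := ltP `|dotp u (e 0%N)| eta.
  rewrite mulr1 -[leLHS]add0r lerD ?mulr_ge0 ?powR_ge0// ler_pM ?powR_ge0//.
  apply: ler_powR2r => //; first exact: radial_ge0.
  exact: (radial_Talpha_le2 n_gt0 oe uu a1).
rewrite mulr0 addr0 ler_pM ?powR_ge0//.
apply: ler_powR2r => //; first exact: radial_ge0.
exact: (radial_Talpha_le_div n_gt0 oe uu (ltW a0) eta0 slab).
Qed.

Lemma sphere_integrand_le alpha eta x : 0 < alpha <= 1 -> 0 < eta ->
  ((if ((0 < enorm x) && (enorm x <= 1))%R then
      (radial (Talpha e alpha) ((enorm x)^-1 *: x) `^ q *
       radial Q ((enorm x)^-1 *: x) `^ p)%:E
    else 0) <=
  ((box 0 x)%:R * (M `^ p * (alpha / eta) `^ q +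
     M `^ p * 2 `^ q * (`|dotp x (e 0%N)| < eta)%R%:R))%:E)%E.
Proof.
move=> al eta0.
case: ifPn => [/andP[x0 x1]|_];
  last by rewrite lee_fin mulr_ge0 ?addr_ge0 ?mulr_ge0 ?powR_ge0.
rewrite box0_enorm_le1// mul1r lee_fin.
apply: le_trans (radial_Talpha_Q_le (dotp_normalize x0) al eta0) _.
rewrite lerD2l ler_wpM2l ?mulr_ge0 ?powR_ge0// ler_nat.
have xu : `|dotp x (e 0%N)| <= `|dotp ((enorm x)^-1 *: x) (e 0%N)|.
  have xi0 : 0 <= (enorm x)^-1 by rewrite invr_ge0 ltW.
  by rewrite dotpZl normrM (ger0_norm xi0) ler_peMl// invf_ge1.
by case: (ltP `|dotp ((enorm x)^-1 *: x) (e 0%N)| eta) => [/(le_lt_trans xu) ->|].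
Qed.

Lemma sphere_integral_Talpha_le (i0 : 'I_n) alpha eta :
  e 0%N 0 i0 != 0 -> (forall i : 'I_n, (i < i0)%N -> e 0%N 0 i = 0) ->
  0 < alpha <= 1 -> 0 < eta ->
  (sphere_integral (fun u =>
     (radial (Talpha e alpha) u `^ q * radial Q u `^ p)%:E) <=
   (n%:R * 2 ^+ n * M `^ p * (alpha / eta) `^ q +
    n%:R * 2 ^+ n * M `^ p * 2 `^ q / `|e 0%N 0 i0| * eta)%:E)%E.
Proof.
move=> ei0 e_lt al eta0.
have integrand_ge0 x : (0 <= (if ((0 < enorm x) && (enorm x <= 1))%R then
      (radial (Talpha e alpha) ((enorm x)^-1 *: x) `^ q *
       radial Q ((enorm x)^-1 *: x) `^ p)%:E else 0))%E.
  by case: ifP; rewrite // lee_fin mulr_ge0 ?powR_ge0.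
have := iint_slab_le integrand_ge0 (mulr_ge0 (powR_ge0 _ _) (powR_ge0 _ _))
  (mulr_ge0 (powR_ge0 _ _) (powR_ge0 _ _)) eta0 ei0 e_lt
  (fun x => sphere_integrand_le x al eta0).
have n_ge0 : (0 <= n%:R%:E :> \bar R)%E by rewrite lee_fin.
move=> /(lee_wpmul2l n_ge0) /le_trans; apply.
by rewrite -EFinM lee_fin le_eqVlt; apply/predU1l; ring.
Qed.

End SphereIntegrand.

Lemma sphere_integral_ge0 (R : realType) n (g : 'rV[R]_n -> \bar R) :
  (forall u, 0 <= g u)%E -> (0 <= sphere_integral g)%E.
Proof.
by move=> g0; rewrite mule_ge0 ?lee_fin// iint_ge0// => x; case: ifP.
Qed.

Lemma first_nonzero_coord (R : nmodType) n (a : 'rV[R]_n) : a != 0 ->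
  exists2 i0 : 'I_n, a 0 i0 != 0 & forall i : 'I_n, (i < i0)%N -> a 0 i = 0.
Proof.
move=> a0; have /existsP[k ak] : [exists k, a 0 k != 0].
  apply: contraR a0 => /existsPn a_eq0; apply/eqP/rowP => k.
  by rewrite mxE; apply/eqP/negPn/a_eq0.
have [i0 ai0 i0_min] := arg_minnP (P := fun k : 'I_n => a 0 k != 0) val ak.
exists i0 => // i ii0; apply/eqP/negPn/negP => /i0_min.
by rewrite leqNgt ii0.
Qed.

Lemma squeeze_at_right0 (R : realType) (F : R -> \bar R) (K L q : R) :
  0 < q -> 0 <= K -> 0 <= L ->
  (forall a, 0 < a <= 1 -> (0 <= F a)%E) ->
  (forall a eta, 0 < a <= 1 -> 0 < eta ->
     (F a <= (K * (a / eta) `^ q + L * eta)%:E)%E) ->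
  F a @[a --> 0^'+] --> 0%E.
Proof.
move=> q0 K0 L0 F0 FKL.
have Ffin a : 0 < a <= 1 -> F a \is a fin_num.
  by move=> a01; rewrite ge0_fin_numE ?F0// (le_lt_trans (FKL a 1 a01 ltr01)) ?ltry.
have near01 : \forall a \near (0 : R)^'+, 0 < a <= 1.
  near=> a; have a0 : 0 < a by near: a; exact: nbhs_right_gt.
  by rewrite a0 /=; near: a; exact: nbhs_right_ltW.
apply/fine_cvgP; split; first by near=> a; apply: Ffin; near: a.
apply/cvgrPdist_le => eps eps0.
have half c X : 0 <= c -> 0 <= X -> X <= eps / (2 * (c + 1)) -> c * X <= eps / 2.
  move=> c0 X0; rewrite !ler_pdivlMr ?mulr_gt0//; [nra|lra].
set eta := eps / (2 * (L + 1)); set E := eps / (2 * (K + 1)).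
have eta0 : 0 < eta by rewrite divr_gt0 ?mulr_gt0// ltr_wpDl.
have E0 : 0 < E by rewrite divr_gt0 ?mulr_gt0// ltr_wpDl.
near=> a.
have a01 : 0 < a <= 1 by near: a.
have small : a < E `^ q^-1 * eta.
  by near: a; apply: nbhs_right_lt; rewrite mulr_gt0 ?powR_gt0.
rewrite sub0r normrN ger0_norm ?fine_ge0 ?F0// -lee_fin fineK ?Ffin//.
apply: le_trans (FKL a eta a01 eta0) _; rewrite lee_fin.
have aeta : (a / eta) `^ q <= E.
  have -> : E = (E `^ q^-1) `^ q by rewrite -powRrM mulVf ?gt_eqF// powRr1// ltW.
  have a0 : 0 <= a by case/andP: a01 => /ltW.
  apply: ler_powR2r; [exact: ltW | by rewrite divr_ge0 // ltW |].
  by rewrite ler_pdivrMr // ltW.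
have := half K _ K0 (powR_ge0 _ _) aeta.
have := half L eta L0 (ltW eta0) (lexx _).
lra.
Unshelve. all: by end_near.
Qed.

Theorem lemma6p3 (R : realType) (n j : nat) (q : R) (e : nat -> 'rV[R]_n)
  (Q : set 'rV[R]_n) :
  (2 <= n)%N -> orthonormal_basis e -> j <> n ->
  0 < q -> q < n%:R - j%:R -> in_Son Q ->
  sphere_integral (fun u => ((radial (Talpha e alpha) u) `^ q *
                             (radial Q u) `^ (n%:R - q - j%:R))%:E)
    @[alpha --> 0^'+] --> 0%E.
Proof.
move=> n2 oe _ q0 qnj [cQ _ _ _].
have n0 : (0 < n)%N by apply: leq_trans n2.
have p0 : 0 <= n%:R - q - j%:R by lra.
have [M QM] := radial_compact_le cQ.
have e0 : e 0%N != 0.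
  apply: contra_eq_neq (oe 0%N 0%N n0 n0) => ->.
  by rewrite dotp0l eq_sym oner_neq0.
have [i0 ei0 e_lt] := first_nonzero_coord e0.
apply: (squeeze_at_right0 q0 _ _ _
  (fun a eta al eta0 => sphere_integral_Talpha_le n0 oe p0 (ltW q0) QM ei0 e_lt al eta0)).
- by rewrite !mulr_ge0 ?powR_ge0 ?exprn_ge0.
- by rewrite !mulr_ge0 ?powR_ge0 ?exprn_ge0 ?invr_ge0.
- by move=> a _; apply: sphere_integral_ge0 => u; rewrite lee_fin mulr_ge0 ?powR_ge0.
Qed.
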